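(* Let $n\ge k\ge 2$ be integers. For a probability vector $\lambda=(\lambda_1,\ldots,\lambda_n)$ (identified with the diagonal density matrix $\mathrm{diag}(\lambda_1,\ldots,\lambda_n)$) define $\rho^P(\lambda)\in\mathbb{R}^n$ by $\rho^P(\lambda)_i=\frac1k\sum_{j=i}^{i+k-1}\lambda_j$, indices taken modulo $n$ (this is the map induced by the POVM $P=(\tfrac1kQ_i)_{i=1}^n$, $Q_i$ the diagonal matrix with $1$ in positions $i,i+1,\ldots,i+k-1$ mod $n$ and $0$ elsewhere). Then the map $\lambda\mapsto\rho^P(\lambda)$ on probability vectors is injective (the POVM is informationally complete) if and only if $k$ and $n$ are coprime.
   Context: A probability vector in $\mathbb{R}^n$ has non-negative entries summing to $1$. The POVM is called informationally complete if the map $\rho\mapsto\rho^P$ on (here diagonal) density matrices is injective. *)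

From mathcomp Require Import all_boot all_order all_algebra.
Set Implicit Arguments. Unset Strict Implicit. Unset Printing Implicit Defensive.
Import Order.TTheory GRing.Theory Num.Theory.
Local Open Scope ring_scope.

(* Indices are 0-based: 'I_n = {0,...,n-1} stands for {1,...,n}. *)

Lemma ord_pos (n : nat) (i : 'I_n) : (0 < n)%N.
Proof. exact: leq_ltn_trans (leq0n i) (ltn_ord i). Qed.

Definition addmod (n : nat) (i : 'I_n) (j : nat) : 'I_n :=
  Ordinal (ltn_pmod (i + j)%N (ord_pos i)).

Definition prob_vec (R : realFieldType) (n : nat) (l : {ffun 'I_n -> R}) : Prop :=
  (forall i, 0 <= l i) /\ \sum_(i < n) l i = 1.

Definition rhoP (R : realFieldType) (n k : nat) (l : {ffun 'I_n -> R})
  : {ffun 'I_n -> R} :=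
  [ffun i => (k%:R)^-1 * \sum_(j < k) l (addmod i j)].

From mathcomp Require Import all_boot all_order all_algebra.
Set Implicit Arguments. Unset Strict Implicit. Unset Printing Implicit Defensive.
Import Order.TTheory GRing.Theory Num.Theory.
Local Open Scope ring_scope.

(* Read a vector cyclically as an [n]-periodic function [d : nat -> R]. If all
   sums of [k] consecutive values of [d] vanish, then [d] is also [k]-periodic,
   hence [gcd(k, n)]-periodic by Bezout. For coprime [k] and [n], [d] is thus
   constant, and a vanishing window of a constant forces [d = 0]; so [rhoP] is
   injective even on all vectors. Conversely, if [g = gcd(k, n) > 1], the jumps
   of the indicator of [g]-divisibility form a nonzero [g]-periodic function
   whose windows of length [k] and [n] telescope to zero; added (scaled by
   [1/n]) to the uniform distribution, it gives a second probability vector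
   with the same image. *)

Definition periodic (T : Type) (f : nat -> T) (p : nat) : Prop :=
  forall m, f (m + p)%N = f m.

Section Periodic.

Variables (T : Type) (f : nat -> T).

Lemma periodicM (p a : nat) : periodic f p -> periodic f (a * p).
Proof.
move=> fp; elim: a => [|a IH] m; first by rewrite mul0n addn0.
by rewrite mulSn addnA IH fp.
Qed.

Lemma periodic_modn (p m : nat) : periodic f p -> f (m %% p)%N = f m.
Proof. by move=> fp; rewrite {2}(divn_eq m p) addnC periodicM. Qed.

Lemma periodic_gcdn (p q : nat) : (0 < p)%N ->
  periodic f p -> periodic f q -> periodic f (gcdn p q).
Proof.
move=> p_gt0 fp fq m; have [a _ /dvdnP [c def_c]] := Bezoutl q p_gt0.
by rewrite -[RHS](periodicM c fp) -def_c addnA periodicM.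
Qed.

Lemma periodic1_const (m : nat) : periodic f 1 -> f m = f 0%N.
Proof. by move=> f1; elim: m => // m <-; rewrite -addn1 f1. Qed.

End Periodic.

Definition window (V : zmodType) (f : nat -> V) (k m : nat) : V :=
  \sum_(j < k) f (m + j)%N.

Section Window.

Variables (V : zmodType) (f : nat -> V).

Lemma window_telescope (k m : nat) :
  window (fun i => f i.+1 - f i) k m = f (m + k)%N - f m.
Proof.
rewrite /window; elim: k => [|k IH]; first by rewrite big_ord0 addn0 subrr.
by rewrite big_ord_recr /= IH addnS addrC addrA subrK.
Qed.

Lemma window_succ (k m : nat) :
  window f k m.+1 - window f k m = f (m + k)%N - f m.
Proof.
rewrite /window -sumrB -(window_telescope k m).
by apply: eq_bigr => j _; rewrite addSn.
Qed.

Lemma window0_periodic (k : nat) :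
  (forall m, window f k m = 0) -> periodic f k.
Proof. by move=> f0 m; apply/eqP; rewrite -subr_eq0 -window_succ !f0 subrr. Qed.

Lemma periodic_window (k p : nat) : periodic f p -> periodic (window f k) p.
Proof. by move=> fp m; apply: eq_bigr => j _; rewrite addnAC fp. Qed.

End Window.

Lemma coprime_window0 (R : numDomainType) (f : nat -> R) (k n : nat) :
  (0 < k)%N -> (0 < n)%N -> coprime k n -> periodic f n ->
  (forall m, window f k m = 0) -> forall m, f m = 0.
Proof.
move=> k_gt0 n_gt0 cop fn f0.
have f1 : periodic f 1.
  by rewrite -(eqP cop) gcdnC; apply: periodic_gcdn (window0_periodic f0).
have := f0 0%N; rewrite /window.
under eq_bigr do rewrite add0n (periodic1_const _ f1).
rewrite sumr_const card_ord -mulr_natr => /eqP.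
rewrite mulf_eq0 pnatr_eq0 eqn0Ngt k_gt0 orbF => /eqP f0_0 m.
by rewrite (periodic1_const _ f1) f0_0.
Qed.

Section DivisibilityJump.

Variables (R : numDomainType) (g : nat).

Definition dvdn_jump (m : nat) : R := (g %| m)%:R - (g %| m.+1)%:R.

Lemma dvdn_jump_periodic (p : nat) : (g %| p)%N -> periodic dvdn_jump p.
Proof.
case/dvdnP=> q -> m; have gqg : (g %| q * g)%N by apply: dvdn_mull.
by rewrite /dvdn_jump -addSn !(addnC _ (q * g)) !dvdn_addr.
Qed.

Lemma window_dvdn_jump (k m : nat) : (g %| k)%N -> window dvdn_jump k m = 0.
Proof.
move=> gk; set ind := fun i => (g %| i)%:R : R.
have -> : window dvdn_jump k m = - window (fun i => ind i.+1 - ind i) k m.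
  by rewrite /window -sumrN; apply: eq_bigr => j _; rewrite opprB.
by rewrite window_telescope /ind dvdn_addl // subrr oppr0.
Qed.

Lemma dvdn_jump0 : (1 < g)%N -> dvdn_jump 0 = 1.
Proof. by move=> g_gt1; rewrite /dvdn_jump dvdn0 dvdn1 gtn_eqF // subr0. Qed.

Lemma dvdn_jump_geN1 (m : nat) : -1 <= dvdn_jump m.
Proof.
rewrite /dvdn_jump lerBrDr; apply: le_trans (ler0n R (g %| m)).
by rewrite addrC subr_le0 lern1 leq_b1.
Qed.

End DivisibilityJump.

Section RhoP.

Variables (R : realFieldType) (n k : nat).

(* Going through [fgraph] avoids building an index of ['I_n] from [m %% n],
   which would require a proof of [0 < n]. *)
Definition cyclic_ext (l : {ffun 'I_n -> R}) (m : nat) : R :=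
  nth 0 (fgraph l) (m %% n).

Lemma cyclic_ext_ord (l : {ffun 'I_n -> R}) (i : 'I_n) : cyclic_ext l i = l i.
Proof. by rewrite /cyclic_ext modn_small // nth_fgraph_ord. Qed.

Lemma cyclic_ext_periodic (l : {ffun 'I_n -> R}) : periodic (cyclic_ext l) n.
Proof. by move=> m; rewrite /cyclic_ext modnDr. Qed.

Lemma rhoP_periodic (f : nat -> R) : periodic f n ->
  rhoP k [ffun i : 'I_n => f i] = [ffun i : 'I_n => k%:R^-1 * window f k i].
Proof.
move=> fn; apply/ffunP => i; rewrite !ffunE; congr (_ * _).
by apply: eq_bigr => j _; rewrite ffunE periodic_modn.
Qed.

Lemma rhoPB (l1 l2 : {ffun 'I_n -> R}) :
  rhoP k (l1 - l2) = rhoP k l1 - rhoP k l2.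
Proof.
apply/ffunP => i; rewrite !ffunE -mulrBr -sumrB.
by congr (_ * _); apply: eq_bigr => j _; rewrite !ffunE.
Qed.

End RhoP.

Lemma rhoP_injective (R : realFieldType) (n k : nat) :
  (0 < k)%N -> (0 < n)%N -> coprime k n -> injective (@rhoP R n k).
Proof.
move=> k_gt0 n_gt0 cop l1 l2 eq_rho; apply/eqP; rewrite -subr_eq0.
set d := l1 - l2; have rho_d : rhoP k d = 0 by rewrite rhoPB eq_rho subrr.
have d_ext : [ffun i : 'I_n => cyclic_ext d i] = d.
  by apply/ffunP => i; rewrite ffunE cyclic_ext_ord.
have win0 m : window (cyclic_ext d) k m = 0.
  rewrite -(periodic_modn _ (periodic_window _ (cyclic_ext_periodic d))).
  move/ffunP: rho_d => /(_ (Ordinal (ltn_pmod m n_gt0))).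
  rewrite -{1}d_ext rhoP_periodic ?ffunE; last exact: cyclic_ext_periodic.
  by move/eqP; rewrite mulf_eq0 invr_eq0 pnatr_eq0 eqn0Ngt k_gt0 => /eqP.
apply/eqP/ffunP => i; rewrite -cyclic_ext_ord ffunE.
exact: coprime_window0 k_gt0 n_gt0 cop (cyclic_ext_periodic d) win0 i.
Qed.

Lemma rhoP_collision (R : realFieldType) (n k g : nat) :
  (0 < n)%N -> (1 < g)%N -> (g %| k)%N -> (g %| n)%N ->
  exists l1 l2 : {ffun 'I_n -> R},
    [/\ prob_vec l1, prob_vec l2, rhoP k l1 = rhoP k l2 & l1 != l2].
Proof.
move=> n_gt0 g_gt1 gk gn; have n0 : n%:R != 0 :> R by rewrite pnatr_eq0 -lt0n.
pose f m : R := dvdn_jump R g m / n%:R.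
have f_per : periodic f n by move=> m; rewrite /f dvdn_jump_periodic.
have win0 p m : (g %| p)%N -> window f p m = 0.
  by move=> gp; rewrite /window -mulr_suml -/(window _ p m) window_dvdn_jump ?mul0r.
pose u : {ffun 'I_n -> R} := [ffun=> n%:R^-1].
pose d : {ffun 'I_n -> R} := [ffun i : 'I_n => f i].
have sum_u : \sum_(i < n) u i = 1.
  under eq_bigr do rewrite ffunE.
  by rewrite sumr_const card_ord -[LHS]mulr_natr mulVf.
have sum_d : \sum_(i < n) d i = 0.
  by rewrite -[RHS](win0 n 0%N gn) /window; apply: eq_bigr => i _; rewrite ffunE.
exists (u + d), u; split.
- split=> [i | ].
    rewrite !ffunE /f -[X in X + _]mul1r -mulrDl divr_ge0 ?ler0n //.
    by rewrite -lerBlDl sub0r dvdn_jump_geN1.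
  rewrite (eq_bigr (fun i => u i + d i)) => [|i _]; last by rewrite ffunE.
  by rewrite big_split /= sum_u sum_d addr0.
- by split=> [i|]; rewrite ?ffunE ?invr_ge0 ?ler0n.
- apply/eqP; rewrite -subr_eq0 -rhoPB addrAC subrr add0r rhoP_periodic //.
  by apply/eqP/ffunP => i; rewrite !ffunE win0 ?mulr0.
- apply/eqP=> /ffunP /(_ (Ordinal n_gt0)) /eqP.
  rewrite !ffunE addrC -subr_eq0 addrK mulf_eq0 invr_eq0 /=.
  by rewrite dvdn_jump0 // oner_eq0 (negbTE n0).
Qed.

Theorem proposition5p2 (R : realFieldType) (n k : nat) :
  (2 <= k)%N -> (k <= n)%N ->
  ((forall l1 l2 : {ffun 'I_n -> R}, prob_vec l1 -> prob_vec l2 ->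
      rhoP k l1 = rhoP k l2 -> l1 = l2)
   <-> coprime k n).
Proof.
move=> k_ge2 k_le_n; have k_gt0 : (0 < k)%N by apply: ltnW.
have n_gt0 : (0 < n)%N by apply: leq_trans k_le_n.
split=> [inj | cop]; last by move=> l1 l2 _ _; apply: rhoP_injective.
apply: contraT => ncop.
have g_gt1 : (1 < gcdn k n)%N by rewrite ltn_neqAle eq_sym ncop gcdn_gt0 k_gt0.
have [l1 [l2 [p1 p2 eq_rho]]] := rhoP_collision R n_gt0 g_gt1
  (dvdn_gcdl k n) (dvdn_gcdr k n).
by rewrite (inj _ _ p1 p2 eq_rho) eqxx.
Qed.
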